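(* Let $n>2$, $V=\mathbb{F}_2^n$, and let $g\in\mathrm{Sym}(V)$ be such that $T\neq T^g$. If $W\le V$ is the subspace with $\sigma_W=T\cap T^g$, then $\dim(W)\le n-2$.
   Context: $T=\{\sigma_v: v\in V\}\le\mathrm{Sym}(V)$ is the group of translations $\sigma_v:x\mapsto x+v$; for a subset $W\subseteq V$, $\sigma_W=\{\sigma_w:w\in W\}$. $T^g=g^{-1}Tg$. Permutations act on the right. *)

From HB Require Import structures.
From mathcomp Require Import all_boot all_order all_algebra all_fingroup all_field.
Set Implicit Arguments. Unset Strict Implicit. Unset Printing Implicit Defensive.
Import GRing.Theory.
Local Open Scope ring_scope.

Notation Vn n := ('rV['F_2]_n) (only parsing).

Definition transl (n : nat) (v : 'rV['F_2]_n) : {perm 'rV['F_2]_n} :=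
  perm (@addIr _ v).

Definition translS (n : nat) (W : pred 'rV['F_2]_n) : {set {perm 'rV['F_2]_n}} :=
  [set transl w | w in W].

Definition translT (n : nat) : {set {perm 'rV['F_2]_n}} :=
  translS (n := n) predT.

(** If [dim W >= n - 1], the conjugate [T^g] contains [sigma_W], so every
[k] in [T^g] is an involution commuting with [sigma_W]; with [c = k 0] this
forces [k w = w + c] and [k (w + c) = w] for [w] in [W].  When [c] is outside
[W], [W] and [W + c] cover [V]; when [c] is in [W], [k sigma_c] is an element
of [T^g] fixing [0], hence trivial since [T^g] acts regularly.  Either way
[k = sigma_c], so [T^g <= T], and [T^g = T] by counting. *)

From HB Require Import structures.
From mathcomp Require Import all_boot all_order all_algebra all_fingroup all_field.
From mathcomp Require Import zify.

Set Implicit Arguments.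
Unset Strict Implicit.
Unset Printing Implicit Defensive.

Import GRing.Theory.
Local Open Scope ring_scope.

Lemma addrr_F2 {vT : lmodType 'F_2} (u : vT) : u + u = 0.
Proof.
by rewrite -mulr2n -scaler_nat (_ : 2%:R = 0 :> 'F_2) ?scale0r //; apply: val_inj.
Qed.

Lemma F2_eq0_or1 (a : 'F_2) : a = 0 \/ a = 1.
Proof. by case: a => [[|[|m]]] // lt; [left | right]; apply: val_inj. Qed.

Lemma addv_line_full (K : fieldType) (vT : vectType K) (U : {vspace vT}) v :
  (\dim {:vT} <= (\dim U).+1)%N -> v \notin U -> (U + <[v]>)%VS = fullv.
Proof.
move=> dimU vNU; apply/eqP; rewrite eqEdim subvf (leq_trans dimU) //.
rewrite (ltn_leqif (dimv_leqif_sup (addvSl U <[v]>))).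
by apply: contra vNU; rewrite subv_add => /andP[_]; rewrite -memvE.
Qed.

Lemma memv_add_line_F2 (vT : vectType 'F_2) (U : {vspace vT}) (v x : vT) :
  x \in (U + <[v]>)%VS -> x \in U \/ x + v \in U.
Proof.
case/memv_addP=> u uU [_ /vlineP[a ->] ->].
have [->|->] := F2_eq0_or1 a; first by left; rewrite scale0r addr0.
by right; rewrite scale1r -addrA addrr_F2 addr0.
Qed.

Section Translations.

Variable n : nat.
Local Notation V := 'rV['F_2]_n.
Local Notation T := (translT n).

Lemma translE (v x : V) : transl v x = x + v.
Proof. by rewrite permE. Qed.

Lemma transl0 : transl (0 : V) = 1%g.
Proof. by apply/permP => x; rewrite translE perm1 addr0. Qed.

Lemma translD (u v : V) : transl (u + v) = (transl u * transl v)%g.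
Proof. by apply/permP => x; rewrite permM !translE addrA. Qed.

Lemma mem_translT (v : V) : transl v \in T.
Proof. exact: imset_f. Qed.

Lemma mem_conj_translT (g k : {perm V}) :
  reflect (exists v, k = (transl v ^ g)%g) (k \in T :^ g)%g.
Proof.
apply: (iffP idP) => [|[v ->]]; last by rewrite memJ_conjg mem_translT.
by rewrite mem_conjg => /imsetP[v _ Ev]; exists v; rewrite -Ev conjgKV.
Qed.

Lemma conj_translD (g : {perm V}) u v :
  (transl (u + v) ^ g)%g = (transl u ^ g * transl v ^ g)%g.
Proof. by rewrite translD conjMg. Qed.

Lemma conj_transl_commute (g : {perm V}) u v :
  commute (transl u ^ g)%g (transl v ^ g)%g.
Proof. by rewrite /commute -!conj_translD addrC. Qed.

Lemma conj_transl_fix (g : {perm V}) v x : (transl v ^ g)%g x = x -> v = 0.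
Proof.
rewrite conjgE !permM translE => /(congr1 (g^-1)%g).
by rewrite -permM mulgV perm1 -{2}[(g^-1)%g x]addr0 => /addrI.
Qed.

Lemma commute_transl_invol (k : {perm V}) w :
  (k * k = 1)%g -> commute k (transl w) -> k w = w + k 0 /\ k (w + k 0) = w.
Proof.
move=> kk kw; have kwE x : k (x + w) = k x + w.
  by rewrite -translE -permM -kw permM translE.
split; first by rewrite -[w]add0r kwE add0r addrC.
by rewrite addrC kwE -permM kk perm1 add0r.
Qed.

Lemma conj_translT_sub (g : {perm V}) (W : {vspace V}) :
  (n <= (\dim W).+1)%N -> {in W, forall w, transl w \in T :^ g}%g ->
  (T :^ g \subset T)%g.
Proof.
move=> dimW WTg; apply/subsetP => _ /mem_conj_translT[v ->].
set k := (transl v ^ g)%g; set c := k 0.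
suff -> : k = transl c by apply: mem_translT.
have kk : (k * k = 1)%g by rewrite -conj_translD addrr_F2 transl0 conj1g.
have kW : {in W, forall w, commute k (transl w)}.
  by move=> w /WTg/mem_conj_translT[u ->]; apply: conj_transl_commute.
have [cW | cNW] := boolP (c \in W).
  have /mem_conj_translT[u Eu] := WTg c cW.
  suff uv : u = v by rewrite Eu uv.
  have : (transl (v + u) ^ g)%g 0 = 0.
    by rewrite conj_translD -Eu permM translE addrr_F2.
  move/conj_transl_fix => vu0.
  by rewrite -[u]addr0 -(addrr_F2 v) addrA (addrC u) vu0 add0r.
have Wc_full : (W + <[c]>)%VS = fullv.
  by apply: addv_line_full cNW; rewrite dimvf /dim /= mul1n.
apply/permP => x; rewrite translE.
have /memv_add_line_F2[xW | xcW] : x \in (W + <[c]>)%VS by rewrite Wc_full memvf.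
  by case: (commute_transl_invol kk (kW x xW)).
have [_] := commute_transl_invol kk (kW _ xcW).
by rewrite -addrA addrr_F2 addr0.
Qed.

End Translations.

Theorem mainTheorem4 (n : nat) (hn : (2 < n)%N) (g : {perm 'rV['F_2]_n})
  (hTg : translT n != (translT n :^ g)%g)
  (W : {vspace 'rV['F_2]_n})
  (hW : translS (mem W) = (translT n :&: (translT n :^ g))%g) :
  (\dim W <= n - 2)%N.
Proof.
rewrite leqNgt; apply: contra hTg => dimW.
have WTg : {in W, forall w, transl w \in translT n :^ g}%g.
  move=> w wW; have : transl w \in translS (mem W) by apply: imset_f.
  by rewrite hW => /setIP[].
have dimW1 : (n <= (\dim W).+1)%N by lia.
have sub := conj_translT_sub dimW1 WTg.
by rewrite eq_sym eqEcard sub cardJg leqnn.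
Qed.
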